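(* Let $\lambda\subset n\times n$ be a Young diagram with at least as many boxes above the main diagonal as below. Let $\lambda^c=\nu_1+\cdots+\nu_k$ be the hook decomposition of its complement, and for each $i$ let $\lambda_i$ be the complement in the $n\times n$ square of $\nu_i$ placed right-justified in the bottom right corner. Then for every face label $\mu$ of $G^{\text{co-rect}}_n$, i.e. every $\mu=(n^a,b^{n-a})$ with $0\le a,b\le n$, \[\mathrm{maxdiag}(\mu\setminus\lambda)=\sum_{i=1}^k\mathrm{maxdiag}(\mu\setminus\lambda_i).\]
   Context: Young diagrams are drawn in English notation inside the $n\times n$ square, top-left justified. The face labels of the co-rectangles plabic graph are the diagrams $(n^a,b^{n-a})$, $0\le a,b\le n$ (the diagrams whose complement in the square is a rectangle in the bottom right corner). Hook decomposition: the complement $\lambda^c$ of $\lambda$ in the square, rotated by $180^\circ$, is a Young diagram; $\lambda^c=\nu_1+\cdots+\nu_k$ is its decomposition into the hooks $\nu_i=(a_i,1^{b_i})$ with corners at its successive diagonal boxes (so $a_1>a_2>\cdots$, $b_1>b_2>\cdots$). Placing a hook $(a,1^b)$ right-justified in the bottom right corner means occupying the last $a$ boxes of the bottom row and the last $b+1$ boxes of the rightmost column. For a set $\nu$ of boxes of the square (e.g. the set difference $\mu\setminus\lambda$), $\mathrm{maxdiag}(\nu)$ is the maximum number of boxes of $\nu$ on a single diagonal of slope $-1$. *)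

From mathcomp Require Import all_boot all_order.
Set Implicit Arguments. Unset Strict Implicit. Unset Printing Implicit Defensive.

(* Boxes of the n x n square: (row, column), 0-indexed, English notation
   (row 0 is the top row, column 0 the leftmost column). *)
Definition box (n : nat) := ('I_n * 'I_n)%type.

(* A Young diagram inside the n x n square, given by its row lengths
   lam = [:: lam_0; ...; lam_{n-1}] (weakly decreasing, each <= n). *)
Definition is_young (n : nat) (lam : seq nat) : bool :=
  [&& size lam == n, sorted geq lam & all (fun x => x <= n) lam].

Definition boxes (n : nat) (lam : seq nat) : {set box n} :=
  [set p : box n | p.2 < nth 0 lam p.1].

Definition n_above n (S : {set box n}) : nat := #|[set p in S | p.1 < p.2]|.
Definition n_below n (S : {set box n}) : nat := #|[set p in S | p.2 < p.1]|.

Definition rot180 n (p : box n) : box n := (rev_ord p.1, rev_ord p.2).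

Definition rot_compl n (lam : seq nat) : {set box n} :=
  [set p : box n | rot180 p \notin boxes n lam].

(* Hook of a diagram S with corner at the diagonal box (d,d):
   a = number of boxes of S in row d at columns >= d,
   b = number of boxes of S in column d at rows > d;
   the hook is (a, 1^b). *)
Definition hook_a n (S : {set box n}) (d : 'I_n) : nat :=
  #|[set p in S | (p.1 == d) && (d <= p.2)]|.
Definition hook_b n (S : {set box n}) (d : 'I_n) : nat :=
  #|[set p in S | (p.2 == d) && (d < p.1)]|.

(* Hook decomposition lam^c = nu_1 + ... + nu_k: the list of hooks (a_i, b_i)
   with corners at the successive diagonal boxes of the rotated complement. *)
Definition hook_decomp n (lam : seq nat) : seq (nat * nat) :=
  [seq (hook_a (rot_compl n lam) d, hook_b (rot_compl n lam) d)
  | d <- enum 'I_n & (d, d) \in rot_compl n lam].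

(* The hook (a, 1^b) placed right-justified in the bottom right corner:
   the last a boxes of the bottom row and the last b+1 boxes of the
   rightmost column. *)
Definition placed_hook n (a b : nat) : {set box n} :=
  [set p : box n | ((p.1 == n.-1 :> nat) && (n - a <= p.2))
                || ((p.2 == n.-1 :> nat) && (n - b.+1 <= p.1))].

Definition hook_compl n (a b : nat) : {set box n} := ~: placed_hook n a b.

(* The face label mu = (n^a, b^(n-a)) of the co-rectangles plabic graph. *)
Definition corect n (a b : nat) : {set box n} :=
  [set p : box n | (p.1 < a) || (p.2 < b)].

(* maxdiag: maximum number of boxes of S on a single diagonal of slope -1,
   i.e. a set {(i,j) : j - i = const}; we index diagonals by
   d = i + n - j (ranging over 1 .. 2n-1). *)
Definition maxdiag n (S : {set box n}) : nat :=
  \max_(d < (2 * n)) #|[set p in S | p.1 + n == p.2 + d]|.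

From mathcomp Require Import all_boot all_order zify.

(* Rows of a Young diagram weakly decrease, so moving a box down or to the
   right keeps it outside [lam].  On any diagonal, the boxes of [mu \ lam] all
   lie in the first [a] rows or all lie in the first [b] columns; moving each
   of them down or right onto the diagonal through [(n-1, b-1)], resp.
   [(a-1, n-1)], is injective.  Hence [maxdiag (mu \ lam)] is the larger of the
   numbers of boxes of [mu \ lam] on these two corner diagonals; indexed by row,
   resp. column, both sets are final segments of [0 .. n-1], so this maximum is
   the size of their union.  A hook placed in the bottom right corner meets
   every diagonal at most once, so each summand is [1] or [0] according to
   whether [mu] meets the placed hook.  Reading off the arm and the leg of the
   hook with corner [(e, e)] in the complement shows that this happens exactly
   when [e] lies in that union. *)

Set Implicit Arguments.
Unset Strict Implicit.
Unset Printing Implicit Defensive.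

Lemma box_inj n (p q : box n) : p.1 = q.1 :> nat -> p.2 = q.2 :> nat -> p = q.
Proof. by case: p q => [i j] [i' j'] /= /ord_inj-> /ord_inj->. Qed.

Definition diagonal n (S : {set box n}) (D : nat) : {set box n} :=
  [set p in S | p.1 + n == p.2 + D].

Lemma diagonal_sub n (S : {set box n}) D : diagonal S D \subset S.
Proof. by apply/subsetP => p; rewrite inE => /andP []. Qed.

Lemma leq_card_diagonal_maxdiag n (S : {set box n}) D :
  D < 2 * n -> #|diagonal S D| <= maxdiag S.
Proof. by move=> ltD; apply: (leq_bigmax (Ordinal ltD)). Qed.

Lemma maxdiag_leq n (S : {set box n}) k :
  (forall D, #|diagonal S D| <= k) -> maxdiag S <= k.
Proof. by move=> le_k; apply/bigmax_leqP => D _; apply: le_k. Qed.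

Lemma maxdiag_sparse n (S : {set box n}) :
  {in S &, forall p q : box n, p.1 + q.2 = q.1 + p.2 -> p = q} ->
  maxdiag S = (S != set0).
Proof.
move=> sparse; apply/eqP; rewrite eqn_leq; apply/andP; split.
  apply: maxdiag_leq => D; have [S0 | /= _] := eqVneq S set0.
    by apply: leq_trans (subset_leq_card (diagonal_sub S D)) _; rewrite S0 cards0.
  apply/card_le1_eqP => -[i j] [i' j']; rewrite !inE /= => /andP [pS /eqP e] /andP [qS /eqP e'].
  by apply/esym/sparse => //=; lia.
have [// | /set0Pn [[i j] ijS]] := eqVneq S set0.
have ltD : i + n - j < 2 * n by have := ltn_ord i; have := ltn_ord j; lia.
apply: leq_trans (leq_card_diagonal_maxdiag S ltD).
rewrite card_gt0; apply/set0Pn; exists (i, j); rewrite !inE ijS /=.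
by have := ltn_ord j; lia.
Qed.

Lemma placed_hook_sparse n ha hb :
  {in placed_hook n ha hb &, forall p q : box n, p.1 + q.2 = q.1 + p.2 -> p = q}.
Proof.
move=> [i j] [i' j']; rewrite !inE /= => hp hq e.
apply: box_inj => /=;
  have := ltn_ord i; have := ltn_ord j; have := ltn_ord i'; have := ltn_ord j'; lia.
Qed.

Lemma corect_meets_placed_hook n a b ha hb : 0 < n -> 0 < ha -> a <= n -> b <= n ->
  (corect n a b :&: placed_hook n ha hb != set0) =
  [|| a == n, n - ha < b, b == n | n - hb.+1 < a].
Proof.
case: n => [// | m] _ ha_gt0 le_a le_b; apply/set0Pn/idP => [[[i j]] | ].
  by rewrite !inE /=; have := ltn_ord i; have := ltn_ord j; lia.
case/or4P => h;
  [ exists (ord_max, ord_max) | exists (ord_max, inord (m.+1 - ha))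
  | exists (ord_max, ord_max) | exists (inord (m.+1 - hb.+1), ord_max) ];
  rewrite !inE /= ?inordK; lia.
Qed.

Lemma maxdiag_corect_hook_compl n a b ha hb : 0 < n -> 0 < ha -> a <= n -> b <= n ->
  maxdiag (corect n a b :\: hook_compl n ha hb) =
  [|| a == n, n - ha < b, b == n | n - hb.+1 < a].
Proof.
move=> n_gt0 ha_gt0 le_a le_b.
rewrite /hook_compl setDE setCK maxdiag_sparse ?corect_meets_placed_hook //.
by move=> p q /setIP [_ hp] /setIP [_ hq]; apply: (placed_hook_sparse hp hq).
Qed.

Lemma card_ord_interval n lo hi : #|[set i : 'I_n | lo <= i < hi]| = minn hi n - lo.
Proof.
rewrite -sum1dep_card -(big_mkord (fun i => lo <= i < hi) (fun _ => 1)).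
rewrite sum1_count /index_iota subn0.
elim: n => [| n IHn]; first by rewrite minn0.
by rewrite -addn1 iotaD count_cat IHn /= add0n; lia.
Qed.

Lemma leq_card_upclosed_prefix n (P : pred nat) (e : 'I_n) k :
  (forall i j, i <= j <= e -> P i -> P j) -> P e ->
  (k <= #|[set i : 'I_n | (i < e) && P i]|) = (k <= e) && P (e - k).
Proof.
move=> P_up Pe; have lt_en := ltn_ord e.
apply/idP/andP => [le_k | [le_ke Pek]].
  have le_ke : k <= e.
    apply: (leq_trans le_k); have := card_ord_interval n 0 e.
    rewrite subn0 (minn_idPl (ltnW lt_en)) => card_e; rewrite -[X in _ <= X]card_e.
    by apply/subset_leq_card/subsetP => i; rewrite !inE => /andP [-> _].
  split => //; apply/negPn/negP => nPek.
  have k_gt0 : 0 < k by case: k le_k le_ke nPek => [|//] _ _; rewrite subn0 Pe.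
  have : #|[set i : 'I_n | (i < e) && P i]| <= #|[set i : 'I_n | (e - k).+1 <= i < e]|.
    apply/subset_leq_card/subsetP => i; rewrite !inE => /andP [lt_ie Pi].
    rewrite lt_ie andbT ltnNge; apply: contra nPek => le_i.
    by apply: P_up Pi; lia.
  by move/(leq_trans le_k); rewrite card_ord_interval; lia.
apply: leq_trans (_ : #|[set i : 'I_n | e - k <= i < e]| <= _).
  by rewrite card_ord_interval; lia.
apply/subset_leq_card/subsetP => i; rewrite !inE => /andP [le_i lt_ie]; rewrite lt_ie.
by apply: P_up Pek; lia.
Qed.

Definition upclosed n (A : {set 'I_n}) := forall i j : 'I_n, i <= j -> i \in A -> j \in A.

Lemma card_setU_upclosed n (A B : {set 'I_n}) :
  upclosed A -> upclosed B -> #|A :|: B| = maxn #|A| #|B|.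
Proof.
move=> upA upB; have [sAB | /subsetPn [i iA iNB]] := boolP (A \subset B).
  by rewrite (setUidPr sAB); apply/esym/maxn_idPr/subset_leq_card.
have sBA : B \subset A.
  apply/subsetP => j jB; have [le_ij | lt_ji] := leqP i j; first exact: upA iA.
  by move: iNB; rewrite (upB _ _ (ltnW lt_ji) jB).
by rewrite (setUidPl sBA); apply/esym/maxn_idPl/subset_leq_card.
Qed.

Lemma leq_card_in_mapsto (T T' : finType) (A : {set T}) (B : {set T'}) (f : T -> T') :
  {in A &, injective f} -> {in A, forall x, f x \in B} -> #|A| <= #|B|.
Proof.
move=> f_inj f_AB; rewrite -(card_in_imset f_inj).
by apply/subset_leq_card/subsetP => _ /imsetP [x xA ->]; apply: f_AB.
Qed.

Lemma card_row_set n (S : {set box n}) (d : 'I_n) (Q : pred 'I_n) :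
  #|[set p in S | (p.1 == d) && Q p.2]| = #|[set j | ((d, j) \in S) && Q j]|.
Proof.
have pair_inj : injective (pair d : 'I_n -> box n) by move=> j j' [].
rewrite -(card_imset _ pair_inj); apply: eq_card => -[i j]; rewrite !inE /=.
apply/andP/imsetP => [[ijS /andP [/eqP eq_id Qj]] | [j' + [-> ->]]].
  by exists j; rewrite ?inE -eq_id ?ijS.
by rewrite inE eqxx => /andP [-> ->].
Qed.

Lemma card_col_set n (S : {set box n}) (d : 'I_n) (Q : pred 'I_n) :
  #|[set p in S | (p.2 == d) && Q p.1]| = #|[set i | ((i, d) \in S) && Q i]|.
Proof.
have pair_inj : injective (pair^~ d : 'I_n -> box n) by move=> i i' [].
rewrite -(card_imset _ pair_inj); apply: eq_card => -[i j]; rewrite !inE /=.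
apply/andP/imsetP => [[ijS /andP [/eqP eq_jd Qi]] | [i' + [-> ->]]].
  by exists i; rewrite ?inE -eq_jd ?ijS.
by rewrite inE eqxx => /andP [-> ->].
Qed.

Section RotatedComplement.

Variables (n : nat) (lam : seq nat).
Local Notation L := (nth 0 lam).

Lemma mem_rot_compl (i j : 'I_n) :
  ((i, j) \in rot_compl n lam) = (L (rev_ord i) <= rev_ord j).
Proof. by rewrite !inE -leqNgt. Qed.

Lemma hook_a_rot_compl (d : 'I_n) :
  hook_a (rot_compl n lam) d = (rev_ord d).+1 - L (rev_ord d).
Proof.
rewrite /hook_a (card_row_set _ _ (fun j => d <= j)).
transitivity #|[set j : 'I_n | d <= j < n - L (rev_ord d)]|.
  by apply: eq_card => j; rewrite !inE /= -leqNgt; have := ltn_ord j; lia.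
by rewrite (card_ord_interval n d) /=; have := ltn_ord d; lia.
Qed.

Lemma hook_b_rot_compl (d : 'I_n) :
  hook_b (rot_compl n lam) d = #|[set i : 'I_n | (i < rev_ord d) && (L i <= rev_ord d)]|.
Proof.
rewrite /hook_b (card_col_set _ _ (fun i => d < i)) -[RHS](card_preimset _ rev_ord_inj).
apply: eq_card => i; rewrite !inE /= -leqNgt.
by have := ltn_ord i; have := ltn_ord d; lia.
Qed.

End RotatedComplement.

Section CornerDiagonals.

Variables (n : nat) (lam : seq nat) (a b : nat).
Local Notation L := (nth 0 lam).
Local Notation S := (corect n a b :\: boxes n lam).

(* [bottom_diag] is the set of rows [e] of the boxes [(e, e - (n - b))] of
   [S], the diagonal through [(n-1, b-1)]; [right_diag] is the set of columns
   [e] of the boxes [(e - (n - a), e)] of [S], the diagonal through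
   [(a-1, n-1)]. *)
Definition bottom_diag : {set 'I_n} :=
  [set e : 'I_n | (n - b <= e) && (L e <= e - (n - b))].
Definition right_diag : {set 'I_n} :=
  [set e : 'I_n | (n - a <= e) && (L (e - (n - a)) <= e)].

Lemma mem_diagonal_corect_diff D (p : box n) :
  (p \in diagonal S D) = [&& (p.1 < a) || (p.2 < b), L p.1 <= p.2 & p.1 + n == p.2 + D].
Proof. by rewrite !inE -leqNgt (andbC (_ <= _)) -andbA. Qed.

Lemma diagonal_corect_diff_one_side D :
  {in diagonal S D, forall p : box n, p.2 < b} \/ {in diagonal S D, forall p : box n, p.1 < a}.
Proof.
have [/exists_inP [[i j] ijD le_bj] | none] := boolP [exists p in diagonal S D, b <= p.2].
  by right => -[i' j'] ijD'; move: ijD ijD' le_bj; rewrite !mem_diagonal_corect_diff /=; lia.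
left => -[i j] ijD; rewrite ltnNge; apply: contraNN none => le_bj.
by apply/exists_inP; exists (i, j).
Qed.

Lemma leq_card_bottom_diag_maxdiag : b <= n -> #|bottom_diag| <= maxdiag S.
Proof.
move=> le_b.
have [-> | /set0Pn [e0 e0B]] := eqVneq bottom_diag set0; first by rewrite cards0.
have ltD : 2 * n - b < 2 * n by move: e0B; rewrite inE; have := ltn_ord e0; lia.
apply: leq_trans (leq_card_diagonal_maxdiag S ltD).
apply: (@leq_card_in_mapsto _ _ _ _ (fun e : 'I_n => (e, insubd e (e - (n - b))))).
  by move=> e e' _ _ [].
move=> e; rewrite inE mem_diagonal_corect_diff /= val_insubd.
by have := ltn_ord e; case: ifP; lia.
Qed.

Lemma leq_card_right_diag_maxdiag : a <= n -> #|right_diag| <= maxdiag S.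
Proof.
move=> le_a.
have [-> | /set0Pn [e0 e0R]] := eqVneq right_diag set0; first by rewrite cards0.
have ltD : a < 2 * n by move: e0R; rewrite inE; have := ltn_ord e0; lia.
apply: leq_trans (leq_card_diagonal_maxdiag S ltD).
apply: (@leq_card_in_mapsto _ _ _ _ (fun e : 'I_n => (insubd e (e - (n - a)), e))).
  by move=> e e' _ _ [].
move=> e; rewrite inE mem_diagonal_corect_diff /= val_insubd.
by have := ltn_ord e; case: ifP; lia.
Qed.

Hypothesis lam_young : is_young n lam.

Lemma row_length_nonincr i j : i <= j < n -> L j <= L i.
Proof.
case/and3P: lam_young => /eqP size_lam sorted_lam _ /andP [le_ij lt_jn].
have geq_trans : transitive geq by move=> y x z /= le_yx le_zy; apply: leq_trans le_zy le_yx.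
apply: (sorted_leq_nth geq_trans (@leqnn) 0 sorted_lam) => //.
  by rewrite inE size_lam (leq_ltn_trans le_ij).
by rewrite inE size_lam.
Qed.

Lemma bottom_diag_upclosed : upclosed bottom_diag.
Proof.
move=> i j le_ij; rewrite !inE; have := @row_length_nonincr i j.
by have := ltn_ord j; lia.
Qed.

Lemma right_diag_upclosed : upclosed right_diag.
Proof.
move=> i j le_ij; rewrite !inE; have := @row_length_nonincr (i - (n - a)) (j - (n - a)).
by have := ltn_ord j; lia.
Qed.

Lemma corner_diag_diagonal e : e \in bottom_diag :|: right_diag -> L e <= e.
Proof.
rewrite !inE; have := @row_length_nonincr (e - (n - a)) e.
by have := ltn_ord e; lia.
Qed.

Lemma leq_card_diagonal_bottom D :
  {in diagonal S D, forall p : box n, p.2 < b} -> #|diagonal S D| <= #|bottom_diag|.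
Proof.
move=> below_b.
have mem_lt p : p \in diagonal S D -> maxn p.1 (p.2 + (n - b)) < n.
  by case: p => i j /below_b /=; have := ltn_ord i; have := ltn_ord j; lia.
apply: (@leq_card_in_mapsto _ _ _ _ (fun p : box n => insubd p.1 (maxn p.1 (p.2 + (n - b))))).
  move=> [i j] [i' j'] ijD ijD' /(congr1 val).
  rewrite !val_insubd (mem_lt _ ijD) (mem_lt _ ijD'); move: ijD ijD'.
  rewrite !mem_diagonal_corect_diff /= => ijD ijD' e; apply: box_inj => /=; lia.
move=> [i j] ijD; rewrite inE val_insubd (mem_lt _ ijD) /=.
have := mem_lt _ ijD; have := below_b _ ijD; move: ijD; rewrite mem_diagonal_corect_diff /=.
by have := @row_length_nonincr i (maxn i (j + (n - b))); lia.
Qed.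

Lemma leq_card_diagonal_right D :
  {in diagonal S D, forall p : box n, p.1 < a} -> #|diagonal S D| <= #|right_diag|.
Proof.
move=> above_a.
have mem_lt p : p \in diagonal S D -> maxn p.2 (p.1 + (n - a)) < n.
  by case: p => i j /above_a /=; have := ltn_ord i; have := ltn_ord j; lia.
apply: (@leq_card_in_mapsto _ _ _ _ (fun p : box n => insubd p.2 (maxn p.2 (p.1 + (n - a))))).
  move=> [i j] [i' j'] ijD ijD' /(congr1 val).
  rewrite !val_insubd (mem_lt _ ijD) (mem_lt _ ijD'); move: ijD ijD'.
  rewrite !mem_diagonal_corect_diff /= => ijD ijD' e; apply: box_inj => /=; lia.
move=> [i j] ijD; rewrite inE val_insubd (mem_lt _ ijD) /=.
have := mem_lt _ ijD; have := above_a _ ijD; move: ijD; rewrite mem_diagonal_corect_diff /=.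
by have := @row_length_nonincr i (maxn j (i + (n - a)) - (n - a)); lia.
Qed.

Lemma maxdiag_corect_diff :
  a <= n -> b <= n -> maxdiag S = maxn #|bottom_diag| #|right_diag|.
Proof.
move=> le_a le_b.
apply/eqP; rewrite eqn_leq geq_max leq_card_bottom_diag_maxdiag ?leq_card_right_diag_maxdiag //.
rewrite !andbT; apply: maxdiag_leq => D.
have [/leq_card_diagonal_bottom | /leq_card_diagonal_right] :=
  diagonal_corect_diff_one_side D => le_card.
  exact: leq_trans le_card (leq_maxl _ _).
exact: leq_trans le_card (leq_maxr _ _).
Qed.

Lemma maxdiag_corect_rot_compl_hook : a <= n -> b <= n ->
  forall d : 'I_n, (d, d) \in rot_compl n lam ->
  maxdiag (corect n a b :\: hook_compl n (hook_a (rot_compl n lam) d) (hook_b (rot_compl n lam) d))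
  = (rev_ord d \in bottom_diag :|: right_diag).
Proof.
move=> le_a le_b d; rewrite mem_rot_compl hook_a_rot_compl hook_b_rot_compl.
move: (rev_ord d) => e diag_e.
have lt_en := ltn_ord e; have n_gt0 : 0 < n := leq_ltn_trans (leq0n e) lt_en.
have P_up i j : i <= j <= e -> L i <= e -> L j <= e.
  by move=> le_ije; have := @row_length_nonincr i j; lia.
have card_prefix k := leq_card_upclosed_prefix k P_up diag_e.
set hb := #|_|.
have le_hb_e : hb <= e by have := card_prefix hb; rewrite leqnn => /esym /andP [].
rewrite maxdiag_corect_hook_compl ?subn_gt0 ?ltnS //.
have -> : (n - hb.+1 < a) = (n - a <= hb) by lia.
rewrite card_prefix !inE; have [-> | _] := eqVneq a n.
  by rewrite subnn subn0 diag_e leq0n !orbT.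
by congr (nat_of_bool _); lia.
Qed.

Lemma sum_rot_compl_diag_corner :
  \sum_(d | (d, d) \in rot_compl n lam) (rev_ord d \in bottom_diag :|: right_diag)
  = #|bottom_diag :|: right_diag|.
Proof.
rewrite -big_mkcondr sum1dep_card -[RHS](card_preimset _ rev_ord_inj).
apply: eq_card => d; rewrite in_set mem_rot_compl [RHS]inE.
by case: (boolP (rev_ord d \in _)) => [/corner_diag_diagonal -> | _]; rewrite ?andbF.
Qed.

End CornerDiagonals.

Theorem mainTheorem12 (n : nat) (lam : seq nat) :
  is_young n lam ->
  n_below (boxes n lam) <= n_above (boxes n lam) ->
  forall a b : nat, a <= n -> b <= n ->
  maxdiag (corect n a b :\: boxes n lam) =
  \sum_(h <- hook_decomp n lam) maxdiag (corect n a b :\: hook_compl n h.1 h.2).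
Proof.
move=> lam_young _ a b le_a le_b.
rewrite /hook_decomp big_map big_filter big_enum_cond /=.
rewrite (eq_bigr _ (maxdiag_corect_rot_compl_hook lam_young le_a le_b)).
rewrite sum_rot_compl_diag_corner // maxdiag_corect_diff //.
by rewrite card_setU_upclosed //; [exact: bottom_diag_upclosed | exact: right_diag_upclosed].
Qed.
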